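(* Let $f\in C^1[0,1]$ with $f(0)=0$, $h:=f'$, and $q$ satisfying (q). For no $c<c^*$ does problem $(P_c)$ admit a solution.
   Context: Condition (q): $q\in C[0,1]$, $q>0$ on $(0,1)$, $q(0)=q(1)=0$, and $\limsup_{\varphi\to0^+}q(\varphi)/\varphi<+\infty$. For $c\in\mathbb R$, a solution of problem $(P_c)$ is a function $z\in C[0,1]\cap C^1(0,1)$ with $\dot z(\varphi)=h(\varphi)-c-q(\varphi)/z(\varphi)$ and $z(\varphi)<0$ for all $\varphi\in(0,1)$, and $z(0)=0$. A solution of $(P^{00}_c)$ is a solution of $(P_c)$ which also satisfies $z(1)=0$. $c^*$ denotes the real number such that $(P^{00}_c)$ has a solution iff $c\ge c^*$. *)

From Stdlib Require Import Reals.
From Coquelicot Require Import Coquelicot.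
Open Scope R_scope.

Definition cont_on_01 (g : R -> R) : Prop :=
  forall x, 0 <= x <= 1 ->
    filterlim g (within (fun y => 0 <= y <= 1) (locally x)) (locally (g x)).

Definition C1_01_with_deriv (f h : R -> R) : Prop :=
  (forall x, 0 <= x <= 1 ->
     filterlim (fun y => (f y - f x) / (y - x))
       (within (fun y => 0 <= y <= 1 /\ y <> x) (locally x)) (locally (h x)))
  /\ cont_on_01 h.

Definition cond_q (q : R -> R) : Prop :=
  cont_on_01 q /\
  (forall x, 0 < x < 1 -> 0 < q x) /\
  q 0 = 0 /\ q 1 = 0 /\
  (exists M delta, 0 < delta /\ forall x, 0 < x < delta -> q x / x <= M).

Definition sol_P (h q : R -> R) (c : R) (z : R -> R) : Prop :=
  cont_on_01 z /\
  (forall x, 0 < x < 1 -> is_derive z x (h x - c - q x / z x)) /\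
  (forall x, 0 < x < 1 -> continuous (Derive z) x) /\
  (forall x, 0 < x < 1 -> z x < 0) /\
  z 0 = 0.

Definition sol_P00 (h q : R -> R) (c : R) (z : R -> R) : Prop :=
  sol_P h q c z /\ z 1 = 0.

(* Let z solve (P_c) with c < cstar and let w solve (P^00_cstar).  Since z(1) <= 0,
   either z(1) = 0, and z itself solves (P^00_c), or z(1) < 0.  In the latter
   case a last-contact argument gives z < w on (0,1): at a contact point
   (z - w)' = cstar - c > 0.  So z is a solution and w a strict supersolution of
   u' = h - c - q/u, and a Perron construction yields a solution of (P^00_c)
   between them.  Either way (P^00_c) is solvable, contradicting c < cstar.

   The integrating factor om = exp (- int q/w^2) turns
   u into p = om u with p' = gam s p, gam nonincreasing below the barrier om w.
   Among functions between om z and om w sharing an integral modulus of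
   continuity G, the operator
      Phi p (x) = inf_(x <= b < 1) (om w (b) - int_x^b gam s (p s) ds)
   is monotone; the supremum Smax of all p with p <= Phi p is a fixed point,
   stays strictly below om w (w is a strict supersolution), hence solves
   p' = gam s p.  Explicit affine barriers show that Smax / om tends to 0 at 1. *)

From Stdlib Require Import Reals Lra.
From Coquelicot Require Import Coquelicot.
Open Scope R_scope.

Lemma locally_01 (x : R) : 0 < x < 1 -> locally x (fun y => 0 < y < 1).
Proof.
  intros Hx. apply locally_interval with (a := Finite 0) (b := Finite 1); simpl; tauto.
Qed.

Lemma cont_01_continuity_pt (g : R -> R) (x : R) :
  cont_on_01 g -> 0 < x < 1 -> continuity_pt g x.
Proof.
  intros Hg Hx. apply continuity_pt_filterlim. intros P HP.
  assert (H01 : locally x (fun y => 0 <= y <= 1)).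
  { eapply filter_imp; [| exact (locally_01 x Hx)]. intros y Hy; lra. }
  specialize (Hg x ltac:(lra) P HP).
  unfold filtermap, within in Hg |- *.
  generalize (filter_and _ _ Hg H01). apply filter_imp. intros y [H1 H2]. exact (H1 H2).
Qed.

Lemma continuity_pt_within (g : R -> R) (D : R -> Prop) (x : R) :
  continuity_pt g x -> filterlim g (within D (locally x)) (locally (g x)).
Proof.
  intros Hg. apply continuity_pt_filterlim in Hg. intros P HP.
  unfold filtermap, within. eapply filter_imp; [| exact (Hg P HP)]. intros y Hy _; exact Hy.
Qed.

Lemma cont_01_eps (g : R -> R) (x : R) : cont_on_01 g -> 0 <= x <= 1 ->
  forall eps, 0 < eps -> exists d, 0 < d /\
    forall y, 0 <= y <= 1 -> Rabs (y - x) < d -> Rabs (g y - g x) < eps.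
Proof.
  intros Hg Hx eps He.
  destruct (Hg x Hx (fun u => Rabs (u - g x) < eps)) as [d Hd].
  - exists (mkposreal eps He). intros y Hy. exact Hy.
  - exists d. split; [apply cond_pos | intros y Hy1 Hy2; apply Hd; auto].
Qed.

Lemma cont_01_minus (f g : R -> R) :
  cont_on_01 f -> cont_on_01 g -> cont_on_01 (fun t => f t - g t).
Proof.
  intros Hf Hg x Hx.
  apply (filterlim_comp_2 (G := locally (f x)) (H := locally (- g x)) f (fun t => - g t) Rplus).
  - apply Hf, Hx.
  - exact (filterlim_comp _ _ _ g Ropp _ _ _ (Hg x Hx) (filterlim_opp (K := R_AbsRing) (g x))).
  - exact (filterlim_plus (K := R_AbsRing) (f x) (- g x)).
Qed.

Lemma cont_01_bounded (g : R -> R) :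
  cont_on_01 g -> exists M, forall x, 0 <= x <= 1 -> Rabs (g x) <= M.
Proof.
  intros Hg.
  set (clamp := fun y => Rmax 0 (Rmin y 1)).
  assert (Hclamp : forall y, 0 <= y <= 1 -> clamp y = y)
    by (intros y Hy; unfold clamp, Rmax, Rmin; repeat destruct Rle_dec; lra).
  assert (Hc : forall x, 0 <= x <= 1 -> continuity_pt (fun y => g (clamp y)) x).
  { intros x Hx. apply continuity_pt_filterlim.
    eapply filterlim_comp with (G := within (fun y => 0 <= y <= 1) (locally x)).
    - intros P [eps He]. exists eps. intros y Hy.
      apply He; [| unfold clamp, Rmax, Rmin; repeat destruct Rle_dec; lra].
      change (Rabs (clamp y - x) < eps). change (Rabs (y - x) < eps) in Hy.
      apply Rabs_lt_between in Hy. apply Rabs_lt_between.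
      unfold clamp, Rmax, Rmin; repeat destruct Rle_dec; lra.
    - rewrite (Hclamp x Hx). apply Hg, Hx. }
  destruct (continuity_ab_maj _ 0 1 Rle_0_1 Hc) as [a [Ha _]].
  destruct (continuity_ab_min _ 0 1 Rle_0_1 Hc) as [b [Hb _]].
  exists (Rmax (Rabs (g (clamp a))) (Rabs (g (clamp b)))).
  intros x Hx. specialize (Ha x Hx). specialize (Hb x Hx). rewrite (Hclamp x Hx) in Ha, Hb.
  pose proof (Rle_abs (g (clamp a))). pose proof (Rle_abs (- g (clamp b))).
  rewrite Rabs_Ropp in H0. pose proof (Rmax_l (Rabs (g (clamp a))) (Rabs (g (clamp b)))).
  pose proof (Rmax_r (Rabs (g (clamp a))) (Rabs (g (clamp b)))).
  apply Rabs_le_between. lra.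
Qed.

Lemma const_cont_pt (a x : R) : continuity_pt (fun _ => a) x.
Proof. apply continuity_pt_const. intros u v; reflexivity. Qed.

Lemma is_derive_continuity_pt (f : R -> R) (x l : R) : is_derive f x l -> continuity_pt f x.
Proof.
  intros H. apply derivable_continuous_pt. exists l. apply is_derive_Reals, H.
Qed.

(* Increments of f are dominated by those of g when |f'| <= g' (two applications
   of the mean value theorem, to g - f and g + f). *)
Lemma derive_dominated (f g df dg : R -> R) (x y : R) : x <= y ->
  (forall t, x <= t <= y -> is_derive f t (df t)) ->
  (forall t, x <= t <= y -> is_derive g t (dg t)) ->
  (forall t, x <= t <= y -> Rabs (df t) <= dg t) ->
  Rabs (f y - f x) <= g y - g x.
Proof.
  intros Hxy Hf Hg Hb.
  assert (Hsum : forall (s t : R), x <= t <= y ->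
            is_derive (fun u => g u + s * f u) t (dg t + s * df t)).
  { intros s t Ht. apply (is_derive_plus g (fun u => s * f u)); [apply Hg, Ht |].
    apply is_derive_scal, Hf, Ht. }
  assert (MVT : forall s : R, exists t, x <= t <= y /\
            (g y + s * f y) - (g x + s * f x) = (dg t + s * df t) * (y - x)).
  { intros s.
    destruct (MVT_gen (fun u => g u + s * f u) x y (fun u => dg u + s * df u)) as [t [Ht E]];
      rewrite Rmin_left, Rmax_right in * by lra.
    - intros t Ht. apply Hsum. lra.
    - intros t Ht. eapply is_derive_continuity_pt, Hsum, Ht.
    - exists t. split; auto. }
  destruct (MVT 1) as [t1 [Ht1 E1]].
  destruct (MVT (-1)) as [t2 [Ht2 E2]].
  pose proof (Hb t1 Ht1) as B1. pose proof (Hb t2 Ht2) as B2.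
  apply Rabs_le_between in B1. apply Rabs_le_between in B2.
  assert (0 <= (dg t1 + 1 * df t1) * (y - x)) by (apply Rmult_le_pos; lra).
  assert (0 <= (dg t2 + -1 * df t2) * (y - x)) by (apply Rmult_le_pos; lra).
  apply Rabs_le_between. lra.
Qed.

Lemma derive_pos_right (f : R -> R) (x l : R) : is_derive f x l -> 0 < l ->
  exists d, 0 < d /\ forall y, x < y < x + d -> f x < f y.
Proof.
  intros H Hl. apply is_derive_Reals in H.
  destruct (H (l / 2)) as [d Hd]; [lra |].
  exists d. split; [apply cond_pos |]. intros y Hy.
  specialize (Hd (y - x)). replace (x + (y - x)) with y in Hd by ring.
  assert (Hlt : Rabs (y - x) < d) by (rewrite Rabs_right; lra).
  specialize (Hd ltac:(lra) Hlt). apply Rabs_lt_between in Hd.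
  assert (0 < (f y - f x) / (y - x) * (y - x)) by (apply Rmult_lt_0_compat; lra).
  field_simplify in H0; lra.
Qed.

Lemma derive_neg_right (f : R -> R) (x l : R) : is_derive f x l -> l < 0 ->
  exists d, 0 < d /\ forall y, x < y < x + d -> f y < f x.
Proof.
  intros H Hl.
  destruct (derive_pos_right (fun t => - f t) x (- l)) as [d [Hd H2]];
    [apply (is_derive_opp f), H | lra |].
  exists d. split; auto. intros y Hy. specialize (H2 y Hy). lra.
Qed.

Definition inf_R (E : R -> Prop) : R := real (Glb_Rbar E).
Definition sup_R (E : R -> Prop) : R := real (Lub_Rbar E).

Lemma inf_R_spec (E : R -> Prop) (r0 lb : R) : E r0 -> (forall r, E r -> lb <= r) ->
  (forall r, E r -> inf_R E <= r) /\ (forall l, (forall r, E r -> l <= r) -> l <= inf_R E).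
Proof.
  intros H0 Hlb. unfold inf_R. destruct (Glb_Rbar_correct E) as [H1 H2].
  destruct (Glb_Rbar E) as [v | |]; simpl in *.
  - split; [exact H1 | intros l Hl; apply (H2 (Finite l)); exact Hl].
  - exfalso. exact (H1 r0 H0).
  - exfalso. apply (H2 (Finite lb)); exact Hlb.
Qed.

Lemma sup_R_spec (E : R -> Prop) (r0 ub : R) : E r0 -> (forall r, E r -> r <= ub) ->
  (forall r, E r -> r <= sup_R E) /\ (forall u, (forall r, E r -> r <= u) -> sup_R E <= u).
Proof.
  intros H0 Hub. unfold sup_R. destruct (Lub_Rbar_correct E) as [H1 H2].
  destruct (Lub_Rbar E) as [v | |]; simpl in *.
  - split; [exact H1 | intros u Hu; apply (H2 (Finite u)); exact Hu].
  - exfalso. apply (H2 (Finite ub)); exact Hub.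
  - exfalso. exact (H1 r0 H0).
Qed.

Lemma Rmax_dist (a b a' b' d : R) :
  Rabs (a - a') <= d -> Rabs (b - b') <= d -> Rabs (Rmax a b - Rmax a' b') <= d.
Proof.
  intros H1 H2. apply Rabs_le_between in H1. apply Rabs_le_between in H2.
  apply Rabs_le_between. unfold Rmax. repeat destruct Rle_dec; lra.
Qed.

Lemma ex_RInt_01 (f : R -> R) (a b : R) : (forall t, 0 < t < 1 -> continuity_pt f t) ->
  0 < a < 1 -> 0 < b < 1 -> ex_RInt f a b.
Proof.
  intros Hf Ha Hb. apply (ex_RInt_continuous (V := R_CompleteNormedModule)). intros t Ht.
  apply continuity_pt_filterlim, Hf. split.
  - apply Rlt_le_trans with (Rmin a b); [apply Rmin_glb_lt |]; lra.
  - apply Rle_lt_trans with (Rmax a b); [| apply Rmax_lub_lt]; lra.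
Qed.

Lemma RInt_Chasles_01 (f : R -> R) (a b : R) : (forall t, 0 < t < 1 -> continuity_pt f t) ->
  0 < a < 1 -> 0 < b < 1 -> RInt f a b = RInt f (1/2) b - RInt f (1/2) a.
Proof.
  intros Hf Ha Hb.
  pose proof (RInt_Chasles (V := R_CompleteNormedModule) f (1/2) a b
    (ex_RInt_01 f (1/2) a Hf ltac:(lra) Ha) (ex_RInt_01 f a b Hf Ha Hb)) as H.
  unfold plus in H; simpl in H. lra.
Qed.

Lemma is_derive_RInt_01 (f : R -> R) (x : R) : (forall t, 0 < t < 1 -> continuity_pt f t) ->
  0 < x < 1 -> is_derive (fun y => RInt f (1/2) y) x (f x).
Proof.
  intros Hf Hx. apply (is_derive_RInt (V := R_NormedModule) f _ (1/2)).
  - eapply filter_imp; [| exact (locally_01 x Hx)]. intros y Hy.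
    apply (RInt_correct (V := R_CompleteNormedModule)), ex_RInt_01; auto; lra.
  - apply continuity_pt_filterlim, Hf, Hx.
Qed.

Lemma RInt_FTC_01 (F f : R -> R) (a b : R) : 0 < a -> a <= b -> b < 1 ->
  (forall t, a <= t <= b -> is_derive F t (f t)) ->
  (forall t, a <= t <= b -> continuity_pt f t) ->
  RInt f a b = F b - F a.
Proof.
  intros Ha Hab Hb HF Hf. apply (is_RInt_unique (V := R_CompleteNormedModule)).
  apply (is_RInt_derive (V := R_CompleteNormedModule) F f a b);
    rewrite Rmin_left, Rmax_right by lra; intros t Ht.
  - apply HF, Ht.
  - apply continuity_pt_filterlim, Hf, Ht.
Qed.

Lemma last_zero (g : R -> R) (a b : R) : 0 <= a <= b -> b <= 1 -> cont_on_01 g ->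
  0 <= g a -> g b < 0 ->
  exists s, a <= s < b /\ g s = 0 /\ forall t, s < t <= b -> g t < 0.
Proof.
  intros Hab Hb Hg Ha Hgb.
  set (E := fun t => a <= t <= b /\ 0 <= g t).
  destruct (sup_R_spec E a b) as [Hub Hleast]; [split; [lra | exact Ha] | intros r [Hr _]; lra |].
  set (s := sup_R E) in *.
  assert (Has : a <= s) by (apply Hub; split; [lra | exact Ha]).
  assert (Hsb : s <= b) by (apply Hleast; intros r [Hr _]; lra).
  assert (Hafter : forall t, s < t <= b -> g t < 0).
  { intros t Ht. apply Rnot_le_lt. intros Hgt.
    assert (t <= s) by (apply Hub; split; [lra | exact Hgt]). lra. }
  (* g s >= 0: otherwise g < 0 near s, so a smaller upper bound of E exists *)
  assert (Hs_nonneg : 0 <= g s).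
  { apply Rnot_lt_le. intros Hneg.
    destruct (cont_01_eps g s Hg ltac:(lra) (- g s) ltac:(lra)) as [d [Hd Hnear]].
    assert (Hsd : s <= Rmax a (s - d / 2)).
    { apply Hleast. intros r [Hr Hgr]. apply Rnot_lt_le. intros Hlt.
      assert (r <= s) by (apply Hub; split; assumption).
      assert (Hr_near : Rabs (r - s) < d).
      { apply Rabs_lt_between. pose proof (Rmax_r a (s - d / 2)). lra. }
      specialize (Hnear r ltac:(lra) Hr_near). apply Rabs_lt_between in Hnear. lra. }
    assert (a < s) by (destruct (Rle_lt_or_eq_dec _ _ Has) as [| <-]; [assumption | lra]).
    unfold Rmax in Hsd. destruct Rle_dec; lra. }
  assert (Hs_lt : s < b) by (destruct (Rle_lt_or_eq_dec _ _ Hsb) as [| ->]; [assumption | lra]).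
  (* g s <= 0: otherwise g > 0 just right of s *)
  assert (Hs_nonpos : g s <= 0).
  { apply Rnot_lt_le. intros Hpos.
    destruct (cont_01_eps g s Hg ltac:(lra) (g s) Hpos) as [d [Hd Hnear]].
    set (t := Rmin (s + d / 2) b).
    assert (Ht : s < t <= b) by (unfold t; split; [apply Rmin_glb_lt | apply Rmin_r]; lra).
    assert (t <= s + d / 2) by apply Rmin_l.
    specialize (Hnear t ltac:(lra) ltac:(apply Rabs_lt_between; lra)).
    apply Rabs_lt_between in Hnear. specialize (Hafter t Ht). lra. }
  exists s. repeat split; auto; lra.
Qed.

Lemma sol_P_nonpos_at_1 (h q z : R -> R) (c : R) : sol_P h q c z -> z 1 <= 0.
Proof.
  intros [Zc [_ [_ [Zneg _]]]]. apply Rnot_lt_le. intros Hpos.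
  destruct (cont_01_eps z 1 Zc ltac:(lra) (z 1) Hpos) as [d [Hd Hnear]].
  set (y := Rmax (1/2) (1 - d/2)).
  assert (1/2 <= y) by apply Rmax_l. assert (1 - d/2 <= y) by apply Rmax_r.
  assert (y < 1) by (apply Rmax_lub_lt; lra).
  specialize (Hnear y ltac:(lra) ltac:(apply Rabs_lt_between; lra)).
  apply Rabs_lt_between in Hnear. specialize (Zneg y ltac:(lra)). lra.
Qed.

(* At a last contact point s of z and w,
   (z - w)'(s) = c' - c > 0, which is incompatible with z < w right after s. *)
Lemma sol_P_below_sol_P00 (h q z w : R -> R) (c c' : R) :
  sol_P h q c z -> sol_P00 h q c' w -> c < c' -> z 1 < 0 ->
  forall x, 0 < x < 1 -> z x < w x.
Proof.
  intros Hz Hw Hc Hz1 x Hx.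
  destruct Hz as [Zc [Zd _]]. destruct Hw as [[Wc [Wd _]] W1].
  apply Rnot_le_lt. intros Hwz.
  destruct (last_zero (fun t => z t - w t) x 1) as [s [Hs [Hzero Hafter]]];
    [lra | lra | apply cont_01_minus; assumption | lra | rewrite W1; lra |].
  assert (Hzs : z s = w s) by lra.
  assert (Hd : is_derive (fun t => z t - w t) s (c' - c)).
  { replace (c' - c) with ((h s - c - q s / z s) - (h s - c' - q s / w s)) by (rewrite Hzs; ring).
    apply (is_derive_minus z w); [apply Zd | apply Wd]; lra. }
  destruct (derive_pos_right _ _ _ Hd ltac:(lra)) as [d [Hd0 Hright]].
  set (t := Rmin (s + d / 2) 1).
  assert (Ht : s < t <= 1) by (unfold t; split; [apply Rmin_glb_lt | apply Rmin_r]; lra).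
  assert (t <= s + d / 2) by apply Rmin_l.
  specialize (Hright t ltac:(lra)). specialize (Hafter t Ht). simpl in Hright. lra.
Qed.

Section Perron.

Variables (h q z w : R -> R) (c c' : R).
Hypothesis h_cont : cont_on_01 h.
Hypothesis q_cond : cond_q q.
Hypothesis z_sol : sol_P h q c z.
Hypothesis w_sol : sol_P00 h q c' w.
Hypothesis c_lt_c' : c < c'.
Hypothesis z_lt_w : forall x, 0 < x < 1 -> z x < w x.

Variables (zmax hmax qmax : R).
Hypothesis z_bound : forall x, 0 <= x <= 1 -> Rabs (z x) <= zmax.
Hypothesis h_bound : forall x, 0 <= x <= 1 -> Rabs (h x) <= hmax.
Hypothesis q_bound : forall x, 0 <= x <= 1 -> Rabs (q x) <= qmax.

Lemma z_neg (x : R) : 0 < x < 1 -> z x < 0.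
Proof. apply z_sol. Qed.
Lemma w_neg (x : R) : 0 < x < 1 -> w x < 0.
Proof. apply w_sol. Qed.
Lemma q_pos (x : R) : 0 < x < 1 -> 0 < q x.
Proof. apply q_cond. Qed.
Lemma z_deriv (x : R) : 0 < x < 1 -> is_derive z x (h x - c - q x / z x).
Proof. apply z_sol. Qed.
Lemma w_deriv (x : R) : 0 < x < 1 -> is_derive w x (h x - c' - q x / w x).
Proof. apply w_sol. Qed.
Lemma h_cont_pt (x : R) : 0 < x < 1 -> continuity_pt h x.
Proof. apply cont_01_continuity_pt, h_cont. Qed.
Lemma q_cont_pt (x : R) : 0 < x < 1 -> continuity_pt q x.
Proof. apply cont_01_continuity_pt, q_cond. Qed.
Lemma z_cont_pt (x : R) : 0 < x < 1 -> continuity_pt z x.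
Proof. intros Hx. eapply is_derive_continuity_pt, z_deriv, Hx. Qed.
Lemma w_cont_pt (x : R) : 0 < x < 1 -> continuity_pt w x.
Proof. intros Hx. eapply is_derive_continuity_pt, w_deriv, Hx. Qed.
Lemma zmax_nonneg : 0 <= zmax.
Proof. pose proof (z_bound 0 ltac:(lra)). pose proof (Rabs_pos (z 0)). lra. Qed.

(* With lam = q / w^2 and om = exp (- int lam), the change
   of unknown p = om * u turns u' = h - c - q/u into p' = gam s p, where gam is
   nonincreasing in p below the barrier "upper" = om * w. *)
Definition lam (s : R) : R := q s / (w s * w s).
Definition Lam (s : R) : R := RInt lam (1/2) s.
Definition om (s : R) : R := exp (- Lam s).
Definition gam (s p : R) : R := om s * (h s - c) - q s * (om s * om s) / p - lam s * p.
Definition upper (s : R) : R := om s * w s.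
Definition lower (s : R) : R := om s * z s.
Definition dupper (s : R) : R := - lam s * om s * w s + om s * (h s - c' - q s / w s).

Lemma lam_cont (x : R) : 0 < x < 1 -> continuity_pt lam x.
Proof.
  intros Hx. pose proof (w_neg x Hx).
  apply continuity_pt_div; [apply q_cont_pt, Hx | apply continuity_pt_mult; apply w_cont_pt, Hx | nra].
Qed.
Lemma lam_pos (x : R) : 0 < x < 1 -> 0 < lam x.
Proof.
  intros Hx. pose proof (w_neg x Hx). pose proof (q_pos x Hx).
  apply Rdiv_lt_0_compat; nra.
Qed.
Lemma om_pos (x : R) : 0 < om x.
Proof. apply exp_pos. Qed.
Lemma om_deriv (x : R) : 0 < x < 1 -> is_derive om x (- lam x * om x).
Proof.
  intros Hx. unfold om.
  replace (- lam x * om x) with (scal (- lam x) (exp (- Lam x))) by (unfold om; cbn; unfold mult; cbn; ring).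
  apply (is_derive_comp exp (fun t => - Lam t)); [apply is_derive_exp |].
  apply (is_derive_opp Lam), is_derive_RInt_01; [apply lam_cont | exact Hx].
Qed.
Lemma om_cont (x : R) : 0 < x < 1 -> continuity_pt om x.
Proof. intros Hx. eapply is_derive_continuity_pt, om_deriv, Hx. Qed.

Lemma upper_neg (x : R) : 0 < x < 1 -> upper x < 0.
Proof. intros Hx. pose proof (om_pos x). pose proof (w_neg x Hx). unfold upper. nra. Qed.
Lemma lower_neg (x : R) : 0 < x < 1 -> lower x < 0.
Proof. intros Hx. pose proof (om_pos x). pose proof (z_neg x Hx). unfold lower. nra. Qed.
Lemma lower_le_upper (x : R) : 0 < x < 1 -> lower x <= upper x.
Proof. intros Hx. pose proof (om_pos x). pose proof (z_lt_w x Hx). unfold lower, upper. nra. Qed.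

Lemma upper_deriv (x : R) : 0 < x < 1 -> is_derive upper x (dupper x).
Proof. intros Hx. apply (is_derive_mult om w); [apply om_deriv, Hx | apply w_deriv, Hx | apply Rmult_comm]. Qed.
Lemma dupper_cont (x : R) : 0 < x < 1 -> continuity_pt dupper x.
Proof.
  intros Hx. pose proof (w_neg x Hx). unfold dupper.
  apply continuity_pt_plus; apply continuity_pt_mult.
  - apply continuity_pt_mult; [apply continuity_pt_opp, lam_cont | apply om_cont]; exact Hx.
  - apply w_cont_pt, Hx.
  - apply om_cont, Hx.
  - apply continuity_pt_minus; [apply continuity_pt_minus; [apply h_cont_pt, Hx | apply const_cont_pt] |].
    apply continuity_pt_div; [apply q_cont_pt, Hx | apply w_cont_pt, Hx | lra].
Qed.

(* The barrier is a strict supersolution: its slope falls short of gam by om (c' - c). *)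
Lemma dupper_minus_gam (x : R) : 0 < x < 1 -> dupper x - gam x (upper x) = om x * (c - c').
Proof.
  intros Hx. pose proof (om_pos x). pose proof (w_neg x Hx).
  unfold dupper, gam, upper, lam. field. lra.
Qed.

Lemma gam_cont (p : R -> R) (x : R) : 0 < x < 1 -> continuity_pt p x -> p x <> 0 ->
  continuity_pt (fun s => gam s (p s)) x.
Proof.
  intros Hx Hp Hp0. unfold gam.
  apply continuity_pt_minus; [apply continuity_pt_minus |].
  - apply continuity_pt_mult; [apply om_cont, Hx |].
    apply continuity_pt_minus; [apply h_cont_pt, Hx | apply const_cont_pt].
  - apply continuity_pt_div; [| exact Hp | exact Hp0].
    apply continuity_pt_mult; [apply q_cont_pt, Hx | apply continuity_pt_mult; apply om_cont, Hx].
  - apply continuity_pt_mult; [apply lam_cont, Hx | exact Hp].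
Qed.

Lemma lower_deriv (x : R) : 0 < x < 1 -> is_derive lower x (gam x (lower x)).
Proof.
  intros Hx. pose proof (z_neg x Hx). pose proof (om_pos x).
  replace (gam x (lower x)) with (- lam x * om x * z x + om x * (h x - c - q x / z x))
    by (unfold gam, lower; field; lra).
  apply (is_derive_mult om z); [apply om_deriv, Hx | apply z_deriv, Hx | apply Rmult_comm].
Qed.
Lemma lower_cont (x : R) : 0 < x < 1 -> continuity_pt lower x.
Proof. intros Hx. eapply is_derive_continuity_pt, lower_deriv, Hx. Qed.

Lemma gam_antitone (s p1 p2 : R) : 0 < s < 1 -> p1 <= p2 -> p2 <= upper s -> gam s p2 <= gam s p1.
Proof.
  intros Hs H12 H2. pose proof (upper_neg s Hs) as Hu. unfold gam, upper, lam in *.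
  pose proof (w_neg s Hs). pose proof (q_pos s Hs). pose proof (om_pos s).
  set (O := om s) in *. set (W := w s) in *. set (Q := q s) in *.
  assert (Hp2 : p2 < 0) by nra.
  assert (Hprod : O * O * (W * W) <= p1 * p2).
  { assert ((O * W) * (O * W) <= p2 * p2) by nra. nra. }
  (* gam s p1 - gam s p2 = Q (p2 - p1) (1/W^2 - O^2/(p1 p2)) *)
  assert (E : (O * (h s - c) - Q * (O * O) / p1 - Q / (W * W) * p1)
            - (O * (h s - c) - Q * (O * O) / p2 - Q / (W * W) * p2)
            = Q * (p2 - p1) * (p1 * p2 - O * O * (W * W)) / (p1 * p2 * (W * W)))
    by (field; repeat split; nra).
  assert (0 <= Q * (p2 - p1) * (p1 * p2 - O * O * (W * W)) / (p1 * p2 * (W * W))); [| lra].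
  assert (0 < p1 * p2) by nra. assert (0 < W * W) by nra.
  apply Rdiv_le_0_compat; [| nra]. apply Rmult_le_pos; [apply Rmult_le_pos |]; lra.
Qed.

(* A common integral modulus of continuity.  k_gam bounds |gam s p| between the
   barriers, k_barrier bounds the slopes of the barriers used near 1, and
   G = int k controls increments of all functions handled by the construction. *)
Definition k_gam (s : R) : R := om s * (Rabs (h s) + Rabs c + q s / Rabs (w s) + lam s * Rabs (z s)).
Definition k_barrier (s : R) : R := om s * ((zmax + 1) / (1 - s) + lam s * (zmax + 2)).
Definition k (s : R) : R := 4 * (Rabs (dupper s) + k_gam s) + k_barrier s.
Definition G (s : R) : R := RInt k (1/2) s.

Lemma gam_bound (s p : R) : 0 < s < 1 -> lower s <= p <= upper s -> Rabs (gam s p) <= k_gam s.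
Proof.
  intros Hs [H1 H2]. assert (Hp : p < 0) by (pose proof (upper_neg s Hs); lra).
  unfold gam, k_gam, lower, upper in *.
  pose proof (w_neg s Hs). pose proof (q_pos s Hs). pose proof (z_neg s Hs).
  pose proof (lam_pos s Hs). pose proof (om_pos s).
  rewrite (Rabs_left (w s)), (Rabs_left (z s)) by lra.
  set (O := om s) in *. set (W := w s) in *. set (Q := q s) in *. set (L := lam s) in *. set (Z := z s) in *.
  assert (T1 : Rabs (O * (h s - c)) <= O * (Rabs (h s) + Rabs c)).
  { rewrite Rabs_mult, (Rabs_right O) by lra. apply Rmult_le_compat_l; [lra |].
    eapply Rle_trans; [apply Rabs_triang | rewrite Rabs_Ropp; lra]. }
  assert (T2 : 0 <= Q * (O * O) / - p <= O * (Q / - W)).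
  { split; [apply Rdiv_le_0_compat; nra |].
    apply Rle_trans with (Q * (O * O) / (O * - W)).
    - unfold Rdiv. apply Rmult_le_compat_l; [nra |]. apply Rinv_le_contravar; nra.
    - right. field. lra. }
  assert (T3 : 0 <= L * - p <= O * (L * - Z)) by (split; nra).
  replace (O * (h s - c) - Q * (O * O) / p - L * p)
    with (O * (h s - c) + Q * (O * O) / - p + L * - p) by (field; nra).
  apply Rabs_le_between. apply Rabs_le_between in T1. split; nra.
Qed.

Lemma k_gam_nonneg (s : R) : 0 < s < 1 -> 0 <= k_gam s.
Proof.
  intros Hs. pose proof (om_pos s). pose proof (lam_pos s Hs). pose proof (q_pos s Hs).
  pose proof (w_neg s Hs). pose proof (Rabs_pos (h s)). pose proof (Rabs_pos c).
  pose proof (Rabs_pos (z s)).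
  assert (0 <= q s / Rabs (w s)) by (apply Rdiv_le_0_compat; [lra | apply Rabs_pos_lt; lra]).
  unfold k_gam. apply Rmult_le_pos; [lra |]. nra.
Qed.
Lemma k_barrier_nonneg (s : R) : 0 < s < 1 -> 0 <= k_barrier s.
Proof.
  intros Hs. pose proof (om_pos s). pose proof (lam_pos s Hs). pose proof zmax_nonneg.
  assert (0 <= (zmax + 1) / (1 - s)) by (apply Rdiv_le_0_compat; lra).
  unfold k_barrier. apply Rmult_le_pos; [lra |]. nra.
Qed.
Lemma k_ge_gam (s : R) : 0 < s < 1 -> 4 * (Rabs (dupper s) + k_gam s) <= k s.
Proof. intros Hs. pose proof (k_barrier_nonneg s Hs). unfold k. lra. Qed.
Lemma k_ge_barrier (s : R) : 0 < s < 1 -> k_barrier s <= k s.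
Proof.
  intros Hs. pose proof (k_gam_nonneg s Hs). pose proof (Rabs_pos (dupper s)). unfold k. lra.
Qed.

Lemma k_cont (x : R) : 0 < x < 1 -> continuity_pt k x.
Proof.
  intros Hx. pose proof (w_neg x Hx).
  assert (Habs : forall f, continuity_pt f x -> continuity_pt (fun t => Rabs (f t)) x)
    by (intros f Hf; exact (continuity_pt_comp f Rabs x Hf (Rcontinuity_abs (f x)))).
  unfold k, k_gam, k_barrier.
  apply continuity_pt_plus; [apply continuity_pt_mult; [apply const_cont_pt | apply continuity_pt_plus] |];
    [| | apply continuity_pt_mult; [apply om_cont, Hx | apply continuity_pt_plus]].
  - apply Habs, dupper_cont, Hx.
  - apply continuity_pt_mult; [apply om_cont, Hx |].
    repeat apply continuity_pt_plus.
    + apply Habs, h_cont_pt, Hx.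
    + apply const_cont_pt.
    + apply continuity_pt_div; [apply q_cont_pt, Hx | apply Habs, w_cont_pt, Hx |].
      apply Rabs_no_R0. lra.
    + apply continuity_pt_mult; [apply lam_cont, Hx | apply Habs, z_cont_pt, Hx].
  - apply continuity_pt_div; [apply const_cont_pt | | lra].
    apply continuity_pt_minus; [apply const_cont_pt | apply derivable_continuous_pt, derivable_pt_id].
  - apply continuity_pt_mult; [apply lam_cont, Hx | apply const_cont_pt].
Qed.
Lemma G_deriv (x : R) : 0 < x < 1 -> is_derive G x (k x).
Proof. apply is_derive_RInt_01, k_cont. Qed.
Lemma G_cont (x : R) : 0 < x < 1 -> continuity_pt G x.
Proof. intros Hx. eapply is_derive_continuity_pt, G_deriv, Hx. Qed.

Lemma G_controls (f df : R -> R) (x y : R) : 0 < x -> x <= y -> y < 1 ->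
  (forall t, x <= t <= y -> is_derive f t (df t)) -> (forall t, x <= t <= y -> Rabs (df t) <= k t) ->
  Rabs (f y - f x) <= G y - G x.
Proof.
  intros H1 H2 H3 Hd Hb. apply (derive_dominated f G df k x y H2 Hd); auto.
  intros t Ht. apply G_deriv. lra.
Qed.

Lemma G_mono (x y : R) : 0 < x -> x <= y -> y < 1 -> G x <= G y.
Proof.
  intros H1 H2 H3.
  pose proof (G_controls (fun _ => 0) (fun _ => 0) x y H1 H2 H3) as H.
  rewrite Rminus_0_r, Rabs_R0 in H. apply Rminus_le_0, H.
  - intros t _. exact (is_derive_const 0 t).
  - intros t Ht. pose proof (k_ge_gam t ltac:(lra)).
    pose proof (k_gam_nonneg t ltac:(lra)). pose proof (Rabs_pos (dupper t)). lra.
Qed.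

Definition admissible (p : R -> R) : Prop :=
  (forall x, 0 < x < 1 -> lower x <= p x <= upper x) /\
  (forall x y, 0 < x -> x <= y -> y < 1 -> Rabs (p y - p x) <= G y - G x).

Lemma admissible_cont (p : R -> R) (x : R) : admissible p -> 0 < x < 1 -> continuity_pt p x.
Proof.
  intros [_ Hp] Hx. apply continuity_pt_locally. intros eps.
  pose proof (proj1 (continuity_pt_locally G x) (G_cont x Hx) eps) as HG.
  generalize (filter_and _ _ HG (locally_01 x Hx)). apply filter_imp. intros u [H1 H2].
  apply Rabs_lt_between in H1. destruct (Rle_dec x u).
  - eapply Rle_lt_trans; [apply Hp | ]; lra.
  - rewrite Rabs_minus_sym. eapply Rle_lt_trans; [apply Hp |]; lra.
Qed.

Lemma gam_admissible_cont (p : R -> R) (x : R) : admissible p -> 0 < x < 1 ->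
  continuity_pt (fun s => gam s (p s)) x.
Proof.
  intros Hp Hx. apply gam_cont; [exact Hx | apply admissible_cont; assumption |].
  pose proof (proj1 Hp x Hx). pose proof (upper_neg x Hx). lra.
Qed.

Lemma lower_admissible : admissible lower.
Proof.
  split.
  - intros x Hx. split; [lra | apply lower_le_upper, Hx].
  - intros x y H1 H2 H3. apply (G_controls lower (fun s => gam s (lower s))); auto.
    + intros t Ht. apply lower_deriv. lra.
    + intros t Ht. pose proof (k_ge_gam t ltac:(lra)). pose proof (Rabs_pos (dupper t)).
      pose proof (k_gam_nonneg t ltac:(lra)).
      pose proof (gam_bound t (lower t) ltac:(lra) (conj (Rle_refl _) (lower_le_upper t ltac:(lra)))).
      lra.
Qed.

(* The Perron operator: Phi p x is the largest value at x of a function with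
   slope gam s (p s) staying below the barrier on [x,1), namely
   Phi p x = inf_(x <= b < 1) (upper b - int_x^b gam s (p s) ds). *)
Definition Igam (p : R -> R) (b : R) : R := RInt (fun s => gam s (p s)) (1/2) b.
Definition excess (p : R -> R) (b : R) : R := upper b - Igam p b.
Definition inf_excess (p : R -> R) (x : R) : R :=
  inf_R (fun r => exists b, x <= b < 1 /\ r = excess p b).
Definition Phi (p : R -> R) (x : R) : R := inf_excess p x + Igam p x.

Lemma excess_plus_Igam (p : R -> R) (x b : R) : admissible p -> 0 < x -> x <= b -> b < 1 ->
  excess p b + Igam p x = upper b - RInt (fun s => gam s (p s)) x b.
Proof.
  intros Hp H1 H2 H3. unfold excess, Igam.
  rewrite (RInt_Chasles_01 _ x b); [ring | | lra | lra].
  intros t Ht. apply gam_admissible_cont; assumption.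
Qed.

(* Every candidate value upper b - int_x^b gam(p) dominates lower x: lower is a
   solution and gam(p) <= gam(lower) since p >= lower. *)
Lemma lower_le_candidate (p : R -> R) (x b : R) : admissible p -> 0 < x -> x <= b -> b < 1 ->
  lower x <= upper b - RInt (fun s => gam s (p s)) x b.
Proof.
  intros Hp H1 H2 H3.
  assert (Hcont : forall t, 0 < t < 1 -> continuity_pt (fun s => gam s (lower s)) t).
  { intros t Ht. apply gam_cont; [exact Ht | apply lower_cont, Ht |].
    pose proof (lower_neg t Ht). lra. }
  assert (Hle : RInt (fun s => gam s (p s)) x b <= RInt (fun s => gam s (lower s)) x b).
  { apply RInt_le; [lra | | |].
    - apply ex_RInt_01; [intros; apply gam_admissible_cont | |]; auto; lra.
    - apply ex_RInt_01; [exact Hcont | lra | lra].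
    - intros t Ht. apply gam_antitone; [lra | |]; apply (proj1 Hp); lra. }
  rewrite (RInt_FTC_01 lower (fun s => gam s (lower s))) in Hle; auto.
  - pose proof (lower_le_upper b ltac:(lra)). lra.
  - intros t Ht. apply lower_deriv. lra.
  - intros t Ht. apply Hcont. lra.
Qed.

Lemma inf_excess_spec (p : R -> R) (x : R) : admissible p -> 0 < x < 1 ->
  (forall b, x <= b < 1 -> inf_excess p x <= excess p b) /\
  (forall l, (forall b, x <= b < 1 -> l <= excess p b) -> l <= inf_excess p x).
Proof.
  intros Hp Hx. unfold inf_excess.
  destruct (inf_R_spec (fun r => exists b, x <= b < 1 /\ r = excess p b) (excess p x) (lower x - Igam p x))
    as [Hlb Hgreatest].
  - exists x. split; [lra | reflexivity].
  - intros r [b [Hb ->]]. pose proof (lower_le_candidate p x b Hp ltac:(lra) ltac:(lra) ltac:(lra)).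
    rewrite <- excess_plus_Igam in H; auto; lra.
  - split.
    + intros b Hb. apply Hlb. exists b. auto.
    + intros l Hl. apply Hgreatest. intros r [b [Hb ->]]. auto.
Qed.

Lemma Phi_le (p : R -> R) (x b : R) : admissible p -> 0 < x -> x <= b -> b < 1 ->
  Phi p x <= upper b - RInt (fun s => gam s (p s)) x b.
Proof.
  intros Hp H1 H2 H3. rewrite <- excess_plus_Igam; auto. unfold Phi.
  pose proof (proj1 (inf_excess_spec p x Hp ltac:(lra)) b ltac:(lra)). lra.
Qed.

Lemma Phi_ge (p : R -> R) (x l : R) : admissible p -> 0 < x < 1 ->
  (forall b, x <= b < 1 -> l <= upper b - RInt (fun s => gam s (p s)) x b) -> l <= Phi p x.
Proof.
  intros Hp Hx Hl. unfold Phi.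
  assert (l - Igam p x <= inf_excess p x); [| lra].
  apply (inf_excess_spec p x Hp Hx). intros b Hb.
  specialize (Hl b Hb). rewrite <- excess_plus_Igam in Hl; auto; lra.
Qed.

(* Phi is monotone, because gam is antitone in p below the barrier. *)
Lemma Phi_mono (p1 p2 : R -> R) : admissible p1 -> admissible p2 ->
  (forall x, 0 < x < 1 -> p1 x <= p2 x) -> forall x, 0 < x < 1 -> Phi p1 x <= Phi p2 x.
Proof.
  intros H1 H2 H12 x Hx. apply Phi_ge; auto. intros b Hb.
  eapply Rle_trans; [apply (Phi_le p1 x b); auto; lra |].
  assert (RInt (fun s => gam s (p2 s)) x b <= RInt (fun s => gam s (p1 s)) x b); [| lra].
  apply RInt_le; [lra | | |].
  - apply ex_RInt_01; [intros; apply gam_admissible_cont | |]; auto; lra.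
  - apply ex_RInt_01; [intros; apply gam_admissible_cont | |]; auto; lra.
  - intros t Ht. apply gam_antitone; [lra | apply H12; lra | apply (proj1 H2); lra].
Qed.

Lemma Igam_deriv (p : R -> R) (x : R) : admissible p -> 0 < x < 1 ->
  is_derive (Igam p) x (gam x (p x)).
Proof.
  intros Hp Hx. apply (is_derive_RInt_01 (fun s => gam s (p s))); [| exact Hx].
  intros t Ht. apply gam_admissible_cont; assumption.
Qed.

Lemma excess_deriv (p : R -> R) (x : R) : admissible p -> 0 < x < 1 ->
  is_derive (excess p) x (dupper x - gam x (p x)).
Proof.
  intros Hp Hx. apply (is_derive_minus upper (Igam p)); [apply upper_deriv | apply Igam_deriv]; auto.
Qed.

Lemma Igam_modulus (p : R -> R) (x y : R) : admissible p -> 0 < x -> x <= y -> y < 1 ->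
  Rabs (Igam p y - Igam p x) <= / 4 * (G y - G x).
Proof.
  intros Hp H1 H2 H3. rewrite Rmult_minus_distr_l.
  apply (derive_dominated (Igam p) (fun t => / 4 * G t) (fun t => gam t (p t)) (fun t => / 4 * k t) x y H2).
  - intros t Ht. apply Igam_deriv; [exact Hp | lra].
  - intros t Ht. apply is_derive_scal, G_deriv. lra.
  - intros t Ht. pose proof (gam_bound t (p t) ltac:(lra) (proj1 Hp t ltac:(lra))).
    pose proof (k_ge_gam t ltac:(lra)). pose proof (Rabs_pos (dupper t)). lra.
Qed.

Lemma excess_modulus (p : R -> R) (x y : R) : admissible p -> 0 < x -> x <= y -> y < 1 ->
  Rabs (excess p y - excess p x) <= / 2 * (G y - G x).
Proof.
  intros Hp H1 H2 H3. rewrite Rmult_minus_distr_l.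
  apply (derive_dominated (excess p) (fun t => / 2 * G t) (fun t => dupper t - gam t (p t))
    (fun t => / 2 * k t) x y H2).
  - intros t Ht. apply excess_deriv; [exact Hp | lra].
  - intros t Ht. apply is_derive_scal, G_deriv. lra.
  - intros t Ht. pose proof (gam_bound t (p t) ltac:(lra) (proj1 Hp t ltac:(lra))).
    pose proof (k_ge_gam t ltac:(lra)). pose proof (Rabs_pos (dupper t)).
    pose proof (Rabs_pos (gam t (p t))).
    pose proof (Rabs_triang (dupper t) (- gam t (p t))) as Htri. rewrite Rabs_Ropp in Htri.
    unfold Rminus. lra.
Qed.

Lemma inf_excess_modulus (p : R -> R) (x y : R) : admissible p -> 0 < x -> x <= y -> y < 1 ->
  inf_excess p x <= inf_excess p y /\ inf_excess p y - / 2 * (G y - G x) <= inf_excess p x.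
Proof.
  intros Hp H1 H2 H3.
  destruct (inf_excess_spec p x Hp ltac:(lra)) as [X1 X2].
  destruct (inf_excess_spec p y Hp ltac:(lra)) as [Y1 Y2].
  split.
  - apply Y2. intros b Hb. apply X1. lra.
  - apply X2. intros b Hb. destruct (Rle_dec y b).
    + specialize (Y1 b ltac:(lra)). pose proof (G_mono x y H1 H2 H3). lra.
    + pose proof (excess_modulus p b y Hp ltac:(lra) ltac:(lra) H3) as E.
      apply Rabs_le_between in E. specialize (Y1 y ltac:(lra)).
      pose proof (G_mono x b H1 ltac:(lra) ltac:(lra)). lra.
Qed.

Lemma Phi_admissible (p : R -> R) : admissible p -> admissible (Phi p).
Proof.
  intros Hp. split.
  - intros x Hx. split.
    + apply Phi_ge; [exact Hp | exact Hx |]. intros b Hb.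
      apply lower_le_candidate; [exact Hp | lra | lra | lra].
    + eapply Rle_trans; [apply (Phi_le p x x); auto; lra |].
      rewrite RInt_point. cbn. lra.
  - intros x y H1 H2 H3. unfold Phi.
    destruct (inf_excess_modulus p x y Hp H1 H2 H3) as [M1 M2].
    pose proof (Igam_modulus p x y Hp H1 H2 H3) as I. apply Rabs_le_between in I.
    apply Rabs_le_between. lra.
Qed.

(* Where the infimum defining inf_excess p x is not attained at b = x, it is
   locally constant: nearby candidates b stay above it by continuity. *)
Lemma inf_excess_locally_const (p : R -> R) (x : R) : admissible p -> 0 < x < 1 ->
  inf_excess p x < excess p x -> locally x (fun y => inf_excess p y = inf_excess p x).
Proof.
  intros Hp Hx Hgap. set (gap := excess p x - inf_excess p x).
  assert (Hgap0 : 0 < gap / 2) by (unfold gap; lra).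
  assert (Hcont : continuity_pt (excess p) x)
    by (eapply is_derive_continuity_pt, excess_deriv; assumption).
  pose proof (proj1 (continuity_pt_locally (excess p) x) Hcont
                (mkposreal (gap / 2) Hgap0)) as Hloc.
  destruct (filter_and _ _ Hloc (locally_01 x Hx)) as [eps Heps].
  assert (Hnear : forall b, Rabs (b - x) < eps -> inf_excess p x + gap / 2 < excess p b /\ 0 < b < 1).
  { intros b Hb. destruct (Heps b Hb) as [Hb1 Hb2]. cbn in Hb1.
    apply Rabs_lt_between in Hb1. unfold gap in *. split; [lra | exact Hb2]. }
  exists eps. intros y Hy. change (Rabs (y - x) < eps) in Hy.
  destruct (Hnear y Hy) as [_ Hy01].
  destruct (inf_excess_spec p x Hp Hx) as [X1 X2].
  destruct (inf_excess_spec p y Hp Hy01) as [Y1 Y2].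
  assert (Hbetween : forall b, Rmin x y <= b < Rmax x y -> Rabs (b - x) < eps).
  { intros b Hb. apply Rabs_lt_between in Hy. apply Rabs_lt_between.
    unfold Rmin, Rmax in Hb. destruct Rle_dec; lra. }
  destruct (Rle_dec y x).
  - rewrite Rmin_right, Rmax_left in Hbetween by lra.
    apply Rle_antisym.
    + apply X2. intros b Hb. apply Y1. lra.
    + apply Y2. intros b Hb. destruct (Rle_dec x b); [apply X1; lra |].
      destruct (Hnear b (Hbetween b ltac:(lra))). lra.
  - rewrite Rmin_left, Rmax_right in Hbetween by lra.
    assert (Hxy : inf_excess p x <= inf_excess p y) by (apply Y2; intros b Hb; apply X1; lra).
    assert (Rmin (inf_excess p y) (inf_excess p x + gap / 2) <= inf_excess p x).
    { apply X2. intros b Hb. destruct (Rle_dec y b).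
      - eapply Rle_trans; [apply Rmin_l | apply Y1; lra].
      - eapply Rle_trans; [apply Rmin_r |].
        destruct (Hnear b (Hbetween b ltac:(lra))). lra. }
    unfold Rmin in H. destruct Rle_dec; lra.
Qed.

Definition subsol (p : R -> R) : Prop := admissible p /\ forall x, 0 < x < 1 -> p x <= Phi p x.
Definition Smax (x : R) : R := sup_R (fun r => exists p, subsol p /\ r = p x).

Lemma lower_subsol : subsol lower.
Proof.
  split; [exact lower_admissible |]. intros x Hx.
  apply Phi_ge; [exact lower_admissible | exact Hx |]. intros b Hb.
  apply lower_le_candidate; [exact lower_admissible | lra | lra | lra].
Qed.

Lemma Smax_spec (x : R) : 0 < x < 1 ->
  (forall p, subsol p -> p x <= Smax x) /\ (forall u, (forall p, subsol p -> p x <= u) -> Smax x <= u).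
Proof.
  intros Hx. unfold Smax.
  destruct (sup_R_spec (fun r => exists p, subsol p /\ r = p x) (lower x) (upper x)) as [S1 S2].
  - exists lower. split; [exact lower_subsol | reflexivity].
  - intros r [p [[[Hp _] _] ->]]. apply Hp, Hx.
  - split.
    + intros p Hp. apply S1. exists p. auto.
    + intros u Hu. apply S2. intros r [p [Hp ->]]. auto.
Qed.

Lemma Smax_admissible : admissible Smax.
Proof.
  split.
  - intros x Hx. destruct (Smax_spec x Hx) as [S1 S2]. split.
    + apply S1, lower_subsol.
    + apply S2. intros p [[Hp _] _]. apply Hp, Hx.
  - intros x y H1 H2 H3.
    destruct (Smax_spec x ltac:(lra)) as [X1 X2]. destruct (Smax_spec y ltac:(lra)) as [Y1 Y2].
    assert (Hp : forall p, subsol p -> Rabs (p y - p x) <= G y - G x)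
      by (intros p [[_ Hp] _]; apply Hp; assumption).
    apply Rabs_le_between. split.
    + assert (Smax x <= Smax y + (G y - G x)); [| lra].
      apply X2. intros p Hsub. pose proof (Hp p Hsub) as E. apply Rabs_le_between in E.
      specialize (Y1 p Hsub). lra.
    + assert (Smax y <= Smax x + (G y - G x)); [| lra].
      apply Y2. intros p Hsub. pose proof (Hp p Hsub) as E. apply Rabs_le_between in E.
      specialize (X1 p Hsub). lra.
Qed.

Lemma Smax_le_Phi (x : R) : 0 < x < 1 -> Smax x <= Phi Smax x.
Proof.
  intros Hx. apply (Smax_spec x Hx). intros p [Hp Hsub].
  eapply Rle_trans; [apply Hsub, Hx |].
  apply Phi_mono; [exact Hp | exact Smax_admissible | | exact Hx].
  intros t Ht. apply (Smax_spec t Ht). split; assumption.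
Qed.

(* Smax is a fixed point of Phi, since Phi Smax is itself a subsolution. *)
Lemma Smax_fixed (x : R) : 0 < x < 1 -> Smax x = Phi Smax x.
Proof.
  intros Hx. apply Rle_antisym; [apply Smax_le_Phi, Hx |].
  apply (Smax_spec x Hx). split; [apply Phi_admissible, Smax_admissible |].
  intros t Ht. apply Phi_mono; [exact Smax_admissible | apply Phi_admissible, Smax_admissible | | exact Ht].
  exact Smax_le_Phi.
Qed.

(* Smax never touches the barrier: at a contact point, the excess function would
   start decreasing (the barrier is a strict supersolution), pushing Phi Smax
   below the barrier. *)
Lemma Smax_lt_upper (x : R) : 0 < x < 1 -> Smax x < upper x.
Proof.
  intros Hx. destruct (proj1 Smax_admissible x Hx) as [_ Hle].
  destruct (Rle_lt_or_eq_dec _ _ Hle) as [| Heq]; [assumption |]. exfalso.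
  pose proof (Smax_fixed x Hx) as Hfix. unfold Phi in Hfix.
  pose proof (excess_deriv Smax x Smax_admissible Hx) as Hd.
  rewrite Heq, dupper_minus_gam in Hd by exact Hx.
  destruct (derive_neg_right _ _ _ Hd) as [d [Hd0 Hdec]]; [pose proof (om_pos x); nra |].
  set (y := Rmin (x + d / 2) ((x + 1) / 2)).
  assert (y <= x + d / 2) by apply Rmin_l. assert (y <= (x + 1) / 2) by apply Rmin_r.
  assert (x < y) by (apply Rmin_glb_lt; lra).
  specialize (Hdec y ltac:(lra)).
  pose proof (proj1 (inf_excess_spec Smax x Smax_admissible Hx) y ltac:(lra)).
  unfold excess at 2 in Hdec. lra.
Qed.

Lemma Smax_deriv (x : R) : 0 < x < 1 -> is_derive Smax x (gam x (Smax x)).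
Proof.
  intros Hx.
  assert (Hgap : inf_excess Smax x < excess Smax x).
  { pose proof (Smax_lt_upper x Hx). pose proof (Smax_fixed x Hx). unfold Phi, excess in *. lra. }
  apply (is_derive_ext_loc (fun y => inf_excess Smax x + Igam Smax y)).
  - generalize (filter_and _ _ (inf_excess_locally_const Smax x Smax_admissible Hx Hgap)
                  (locally_01 x Hx)).
    apply filter_imp. intros y [Hconst Hy].
    rewrite (Smax_fixed y Hy). unfold Phi. rewrite Hconst. reflexivity.
  - replace (gam x (Smax x)) with (0 + gam x (Smax x)) by ring.
    apply (is_derive_plus (fun _ => inf_excess Smax x) (Igam Smax));
      [exact (is_derive_const _ x) | apply Igam_deriv; [exact Smax_admissible | exact Hx]].
Qed.

(* Undoing the change of unknown: U solves the equation of (P_c) between z and w. *)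
Definition U (x : R) : R := Smax x / om x.

Lemma U_deriv (x : R) : 0 < x < 1 -> is_derive U x (h x - c - q x / U x).
Proof.
  intros Hx. pose proof (om_pos x). pose proof (Smax_lt_upper x Hx). pose proof (upper_neg x Hx).
  unfold U.
  replace (h x - c - q x / (Smax x / om x))
    with ((gam x (Smax x) * om x - Smax x * (- lam x * om x)) / om x ^ 2) by (unfold gam; field; lra).
  apply is_derive_div; [apply Smax_deriv, Hx | apply om_deriv, Hx | lra].
Qed.

Lemma U_between (x : R) : 0 < x < 1 -> z x <= U x < w x.
Proof.
  intros Hx. pose proof (om_pos x). pose proof (Smax_lt_upper x Hx).
  destruct (proj1 Smax_admissible x Hx) as [Hlow _]. unfold U, upper, lower in *.
  split.
  - apply Rmult_le_reg_r with (om x); [lra |]. field_simplify; lra.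
  - apply Rmult_lt_reg_r with (om x); [lra |]. field_simplify; lra.
Qed.

(* Barriers near x = 1.  For b < 0 and a slope K large enough, the function
   om t (b - K (1 - t)), i.e. u = b - K (1 - t) in the original unknown, is a
   subsolution on [f1,1); continued to the left of f1 by om t times its value
   at f1, it lies below lower there.  Hence it stays below Smax. *)
Section Barrier.

Variables (b K f1 : R).
Hypothesis f1_in : 0 < f1 < 1.
Hypothesis b_range : -1 <= b < 0.
Hypothesis K_nonneg : 0 <= K.
Hypothesis K_at_f1 : K * (1 - f1) = zmax + 1.
Hypothesis w_above_b : forall t, f1 <= t < 1 -> b <= w t.
Hypothesis K_slope : forall t, f1 <= t < 1 -> h t - c + q t / (K * (1 - t) - b) <= K.

Definition rho1 (t : R) : R := om t * (b - K * (1 - t)).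
Definition drho1 (t : R) : R := - lam t * om t * (b - K * (1 - t)) + om t * K.
Definition rho0 (t : R) : R := om t * (b - K * (1 - f1)).
Definition barrier (t : R) : R := om t * (b - K * (1 - Rmax t f1)).

Lemma barrier_left (t : R) : t <= f1 -> barrier t = rho0 t.
Proof. intros Ht. unfold barrier, rho0. rewrite Rmax_right by exact Ht. reflexivity. Qed.
Lemma barrier_right (t : R) : f1 <= t -> barrier t = rho1 t.
Proof. intros Ht. unfold barrier, rho1. rewrite Rmax_left by exact Ht. reflexivity. Qed.

Lemma rho1_deriv (t : R) : 0 < t < 1 -> is_derive rho1 t (drho1 t).
Proof.
  intros Ht. unfold rho1, drho1.
  replace (- lam t * om t * (b - K * (1 - t)) + om t * K)
    with (- lam t * om t * (b - K * (1 - t)) + om t * (0 - K * (0 - 1))) by ring.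
  apply (is_derive_mult om (fun u => b - K * (1 - u))); [apply om_deriv, Ht | | apply Rmult_comm].
  apply (is_derive_minus (fun _ => b) (fun u => K * (1 - u))); [exact (is_derive_const b t) |].
  apply (is_derive_scal (fun u => 1 - u)).
  apply (is_derive_minus (fun _ => 1) (fun u => u)); [exact (is_derive_const 1 t) | exact (is_derive_id t)].
Qed.
Lemma drho1_cont (t : R) : 0 < t < 1 -> continuity_pt drho1 t.
Proof.
  intros Ht. unfold drho1.
  assert (Haff : continuity_pt (fun u => b - K * (1 - u)) t).
  { apply continuity_pt_minus; [apply const_cont_pt |].
    apply continuity_pt_mult; [apply const_cont_pt |].
    apply continuity_pt_minus; [apply const_cont_pt | apply derivable_continuous_pt, derivable_pt_id]. }
  apply continuity_pt_plus; apply continuity_pt_mult; try apply om_cont, Ht.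
  - apply continuity_pt_mult; [apply continuity_pt_opp, lam_cont, Ht | apply om_cont, Ht].
  - exact Haff.
  - apply const_cont_pt.
Qed.
Lemma rho1_neg (t : R) : 0 < t < 1 -> rho1 t < 0.
Proof.
  intros Ht. pose proof (om_pos t). assert (0 <= K * (1 - t)) by (apply Rmult_le_pos; lra).
  unfold rho1. nra.
Qed.

Lemma rho1_subsolution (t : R) : f1 <= t < 1 -> gam t (rho1 t) <= drho1 t.
Proof.
  intros Ht. pose proof (om_pos t). pose proof (K_slope t Ht).
  assert (0 <= K * (1 - t)) by (apply Rmult_le_pos; lra).
  replace (gam t (rho1 t)) with (om t * (h t - c + q t / (K * (1 - t) - b)) - lam t * rho1 t)
    by (unfold gam, rho1; field; lra).
  unfold drho1, rho1. apply Rmult_le_compat_l with (r := om t) in H0; lra.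
Qed.

Lemma barrier_below_lower (t : R) : 0 < t <= f1 -> barrier t < lower t.
Proof.
  intros Ht. rewrite barrier_left by lra. unfold rho0, lower. rewrite K_at_f1.
  pose proof (z_bound t ltac:(lra)) as Hz. apply Rabs_le_between in Hz.
  apply Rmult_lt_compat_l; [apply om_pos | lra].
Qed.

Lemma barrier_below_upper (t : R) : 0 < t < 1 -> barrier t <= upper t.
Proof.
  intros Ht. destruct (Rle_dec t f1).
  - pose proof (barrier_below_lower t ltac:(lra)). pose proof (lower_le_upper t Ht). lra.
  - rewrite barrier_right by lra. unfold rho1, upper.
    assert (0 <= K * (1 - t)) by (apply Rmult_le_pos; lra).
    apply Rmult_le_compat_l; [apply Rlt_le, om_pos |]. pose proof (w_above_b t ltac:(lra)). lra.
Qed.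

(* Both pieces of the barrier have slopes bounded by k_barrier <= k. *)
Lemma rho0_modulus (x y : R) : 0 < x -> x <= y -> y < 1 ->
  Rabs (rho0 y - rho0 x) <= G y - G x.
Proof.
  intros H1 H2 H3. apply (G_controls rho0 (fun t => - lam t * om t * (b - K * (1 - f1)))); auto.
  - intros t Ht. unfold rho0.
    replace (- lam t * om t * (b - K * (1 - f1))) with (- lam t * om t * (b - K * (1 - f1)) + om t * 0) by ring.
    apply (is_derive_mult om (fun _ => b - K * (1 - f1))); [apply om_deriv; lra | | apply Rmult_comm].
    exact (is_derive_const _ t).
  - intros t Ht. pose proof (k_ge_barrier t ltac:(lra)). pose proof (om_pos t).
    pose proof (lam_pos t ltac:(lra)). pose proof zmax_nonneg.
    assert (0 <= (zmax + 1) / (1 - t)) by (apply Rdiv_le_0_compat; lra).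
    rewrite K_at_f1. unfold k_barrier in *.
    replace (- lam t * om t * (b - (zmax + 1))) with (om t * (lam t * (zmax + 1 - b))) by ring.
    assert (lam t * (zmax + 1 - b) <= lam t * (zmax + 2)) by (apply Rmult_le_compat_l; lra).
    rewrite Rabs_right by (apply Rle_ge, Rmult_le_pos; [| apply Rmult_le_pos]; lra).
    eapply Rle_trans; [| exact H]. apply Rmult_le_compat_l; lra.
Qed.

Lemma rho1_modulus (x y : R) : f1 <= x -> x <= y -> y < 1 ->
  Rabs (rho1 y - rho1 x) <= G y - G x.
Proof.
  intros H1 H2 H3. apply (G_controls rho1 drho1); [lra | lra | lra | intros t Ht; apply rho1_deriv; lra |].
  intros t Ht. pose proof (k_ge_barrier t ltac:(lra)). pose proof (om_pos t).
  pose proof (lam_pos t ltac:(lra)).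
  assert (HKt : 0 <= K * (1 - t) <= zmax + 1).
  { split; [apply Rmult_le_pos; lra |]. rewrite <- K_at_f1. apply Rmult_le_compat_l; lra. }
  assert (K <= (zmax + 1) / (1 - t)).
  { apply Rmult_le_reg_r with (1 - t); [lra |]. field_simplify; lra. }
  replace (drho1 t) with (om t * (lam t * (K * (1 - t) - b) + K)) by (unfold drho1; ring).
  assert (lam t * (K * (1 - t) - b) <= lam t * (zmax + 2)) by (apply Rmult_le_compat_l; lra).
  assert (0 <= lam t * (K * (1 - t) - b)) by (apply Rmult_le_pos; lra).
  unfold k_barrier in *. rewrite Rabs_right by (apply Rle_ge, Rmult_le_pos; lra).
  eapply Rle_trans; [| exact H]. apply Rmult_le_compat_l; lra.
Qed.

Lemma barrier_modulus (x y : R) : 0 < x -> x <= y -> y < 1 ->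
  Rabs (barrier y - barrier x) <= G y - G x.
Proof.
  intros H1 H2 H3.
  destruct (Rle_dec y f1).
  - rewrite !barrier_left by lra. apply rho0_modulus; assumption.
  - destruct (Rle_dec f1 x).
    + rewrite !barrier_right by lra. apply rho1_modulus; assumption.
    + pose proof (rho0_modulus x f1 H1 ltac:(lra) ltac:(lra)) as T0.
      pose proof (rho1_modulus f1 y ltac:(lra) ltac:(lra) H3) as T1.
      rewrite (barrier_left x), (barrier_right y) by lra.
      assert (Hf1 : rho0 f1 = rho1 f1) by (unfold rho0, rho1; reflexivity).
      apply Rabs_le_between in T0. apply Rabs_le_between in T1. apply Rabs_le_between. lra.
Qed.

Lemma barrier_le_Phi (p : R -> R) (x : R) : admissible p -> (forall t, 0 < t < 1 -> barrier t <= p t) ->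
  f1 <= x < 1 -> barrier x <= Phi p x.
Proof.
  intros Hp Habove Hx. apply Phi_ge; [exact Hp | lra |]. intros bb Hbb.
  assert (Hrho : forall t, x <= t <= bb -> continuity_pt (fun s => gam s (rho1 s)) t).
  { intros t Ht. apply gam_cont; [lra | eapply is_derive_continuity_pt, rho1_deriv; lra |].
    pose proof (rho1_neg t ltac:(lra)). lra. }
  assert (I1 : RInt (fun s => gam s (p s)) x bb <= RInt (fun s => gam s (rho1 s)) x bb).
  { apply RInt_le; [lra | apply ex_RInt_01; [intros; apply gam_admissible_cont | |]; auto; lra | |].
    - apply (ex_RInt_continuous (V := R_CompleteNormedModule)).
      rewrite Rmin_left, Rmax_right by lra. intros t Ht. apply continuity_pt_filterlim, Hrho, Ht.
    - intros t Ht. rewrite <- barrier_right by lra.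
      apply gam_antitone; [lra | apply Habove; lra | apply (proj1 Hp); lra]. }
  assert (I2 : RInt (fun s => gam s (rho1 s)) x bb <= RInt drho1 x bb).
  { apply RInt_le; [lra | | |].
    - apply (ex_RInt_continuous (V := R_CompleteNormedModule)).
      rewrite Rmin_left, Rmax_right by lra. intros t Ht. apply continuity_pt_filterlim, Hrho, Ht.
    - apply ex_RInt_01; [exact drho1_cont | lra | lra].
    - intros t Ht. apply rho1_subsolution. lra. }
  rewrite (RInt_FTC_01 rho1 drho1 x bb) in I2 by
    (lra || (intros t Ht; apply rho1_deriv; lra) || (intros t Ht; apply drho1_cont; lra)).
  pose proof (barrier_below_upper bb ltac:(lra)).
  rewrite barrier_right in * by lra. lra.
Qed.

(* max (Smax, barrier) is again a subsolution, so Smax dominates the barrier. *)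
Lemma max_barrier_subsol : subsol (fun t => Rmax (Smax t) (barrier t)).
Proof.
  assert (Hadm : admissible (fun t => Rmax (Smax t) (barrier t))).
  { split.
    - intros x Hx. destruct (proj1 Smax_admissible x Hx) as [S1 S2]. split.
      + eapply Rle_trans; [exact S1 | apply Rmax_l].
      + apply Rmax_lub; [exact S2 | apply barrier_below_upper, Hx].
    - intros x y H1 H2 H3. apply Rmax_dist; [apply Smax_admissible | apply barrier_modulus]; assumption. }
  split; [exact Hadm |]. intros x Hx.
  destruct (Rle_dec (barrier x) (Smax x)).
  - rewrite Rmax_left by lra. rewrite (Smax_fixed x Hx).
    apply Phi_mono; [exact Smax_admissible | exact Hadm | | exact Hx]. intros t _. apply Rmax_l.
  - rewrite Rmax_right by lra.
    assert (f1 < x).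
    { apply Rnot_le_lt. intros Hle. pose proof (barrier_below_lower x ltac:(lra)).
      pose proof (proj1 (proj1 Smax_admissible x Hx)). lra. }
    apply barrier_le_Phi; [exact Hadm | intros t _; apply Rmax_r | lra].
Qed.

Lemma Smax_ge_barrier (x : R) : 0 < x < 1 -> barrier x <= Smax x.
Proof.
  intros Hx. eapply Rle_trans; [apply Rmax_r |].
  apply (proj1 (Smax_spec x Hx) _ max_barrier_subsol).
Qed.

End Barrier.

Lemma rhs_bound (e D t : R) : 0 < e -> 0 < t < 1 -> e / 4 <= D ->
  h t - c + q t / D <= hmax + Rabs c + 4 * qmax / e.
Proof.
  intros He Ht HD.
  pose proof (q_bound t ltac:(lra)) as Hqt. apply Rabs_le_between in Hqt.
  assert (Hqmax : 0 <= qmax) by (pose proof (q_pos t Ht); lra).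
  assert (Hq : q t / D <= 4 * qmax / e).
  { apply Rle_trans with (qmax / D).
    - unfold Rdiv. apply Rmult_le_compat_r; [apply Rlt_le, Rinv_0_lt_compat |]; lra.
    - apply Rle_trans with (qmax / (e / 4)); [| right; field; lra].
      unfold Rdiv. apply Rmult_le_compat_l; [lra | apply Rinv_le_contravar; lra]. }
  pose proof (h_bound t ltac:(lra)) as Hht. apply Rabs_le_between in Hht.
  pose proof (Rle_abs (- c)) as Hc. rewrite Rabs_Ropp in Hc. lra.
Qed.

(* For every small level e, a barrier with b = - e / 4 exists: f1 is taken so
   close to 1 that w >= - e / 4 on [f1,1), and then K = (zmax + 1) / (1 - f1). *)
Lemma barrier_parameters (e : R) : 0 < e <= 1 ->
  exists K f1, 0 < f1 < 1 /\ 0 <= K /\ K * (1 - f1) = zmax + 1 /\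
    (forall t, f1 <= t < 1 -> - e / 4 <= w t) /\
    (forall t, f1 <= t < 1 -> h t - c + q t / (K * (1 - t) - - e / 4) <= K).
Proof.
  intros He. destruct w_sol as [[Wc _] W1].
  destruct (cont_01_eps w 1 Wc ltac:(lra) (e / 4) ltac:(lra)) as [dw [Hdw Hw1]].
  rewrite W1 in Hw1.
  pose proof zmax_nonneg.
  assert (Hhmax : 0 <= hmax) by (pose proof (h_bound 0 ltac:(lra)); pose proof (Rabs_pos (h 0)); lra).
  assert (Hqmax : 0 <= qmax) by (pose proof (q_bound 0 ltac:(lra)); pose proof (Rabs_pos (q 0)); lra).
  set (R0 := hmax + Rabs c + 4 * qmax / e + 1).
  assert (HR0 : 1 <= R0).
  { pose proof (Rabs_pos c). assert (0 <= 4 * qmax / e) by (apply Rdiv_le_0_compat; lra).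
    unfold R0. lra. }
  set (d1 := Rmin (1/2) (Rmin (dw / 2) ((zmax + 1) / R0))).
  assert (d1 <= 1/2) by apply Rmin_l.
  assert (d1 <= dw / 2) by (eapply Rle_trans; [apply Rmin_r | apply Rmin_l]).
  assert (Hd1R0 : d1 <= (zmax + 1) / R0) by (eapply Rle_trans; [apply Rmin_r | apply Rmin_r]).
  assert (Hd1 : 0 < d1).
  { apply Rmin_glb_lt; [lra | apply Rmin_glb_lt; [lra | apply Rdiv_lt_0_compat; lra]]. }
  assert (HK : R0 <= (zmax + 1) / d1).
  { apply Rmult_le_reg_r with (d1 / R0); [apply Rdiv_lt_0_compat; lra |].
    replace (R0 * (d1 / R0)) with d1 by (field; lra).
    replace ((zmax + 1) / d1 * (d1 / R0)) with ((zmax + 1) / R0) by (field; lra). exact Hd1R0. }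
  exists ((zmax + 1) / d1), (1 - d1).
  split; [lra |]. split; [apply Rdiv_le_0_compat; lra |]. split; [field; lra |]. split.
  - intros t Ht. assert (Hwt : Rabs (w t - 0) < e / 4) by (apply Hw1; [lra | apply Rabs_lt_between; lra]).
    apply Rabs_lt_between in Hwt. lra.
  - intros t Ht. assert (0 <= (zmax + 1) / d1 * (1 - t))
      by (apply Rmult_le_pos; [apply Rdiv_le_0_compat |]; lra).
    pose proof (rhs_bound e ((zmax + 1) / d1 * (1 - t) - - e / 4) t ltac:(lra) ltac:(lra) ltac:(lra)).
    unfold R0 in HK. lra.
Qed.

(* U tends to 0 at 1: it is squeezed between w (which vanishes at 1) and the
   barriers of arbitrarily small level. *)
Lemma U_near_1 (eps : R) : 0 < eps -> exists d, 0 < d /\ forall x, 1 - d < x < 1 -> - eps < U x.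
Proof.
  intros Heps. set (e := Rmin eps 1).
  assert (He : 0 < e <= 1) by (split; [apply Rmin_glb_lt | apply Rmin_r]; lra).
  assert (e <= eps) by apply Rmin_l.
  destruct (barrier_parameters e He) as [K [f1 [Hf1 [HK0 [HKf1 [Hw HKs]]]]]].
  assert (HK : 0 < K).
  { destruct (Rle_lt_or_eq_dec _ _ HK0) as [| <-]; [assumption |].
    pose proof zmax_nonneg. lra. }
  exists (Rmin (1 - f1) (e / (2 * K))). split.
  { apply Rmin_glb_lt; [lra | apply Rdiv_lt_0_compat; lra]. }
  intros x Hx.
  assert (1 - x < 1 - f1) by (pose proof (Rmin_l (1 - f1) (e / (2 * K))); lra).
  assert (HKx : K * (1 - x) < e / 2).
  { assert (1 - x < e / (2 * K)) by (pose proof (Rmin_r (1 - f1) (e / (2 * K))); lra).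
    apply Rmult_lt_compat_l with (r := K) in H1; [| exact HK].
    replace (K * (e / (2 * K))) with (e / 2) in H1 by (field; lra). exact H1. }
  pose proof (Smax_ge_barrier (- e / 4) K f1 Hf1 ltac:(lra) HK0 HKf1 Hw HKs x ltac:(lra)) as Hge.
  rewrite barrier_right in Hge by lra. unfold rho1 in Hge.
  pose proof (om_pos x).
  assert (b_le_U : - e / 4 - K * (1 - x) <= U x).
  { unfold U. apply Rmult_le_reg_r with (om x); [lra |]. field_simplify; lra. }
  lra.
Qed.

Definition U01 (t : R) : R := if Rle_dec t 0 then 0 else if Rle_dec 1 t then 0 else U t.

Lemma U01_interior (t : R) : 0 < t < 1 -> U01 t = U t.
Proof. intros Ht. unfold U01. destruct (Rle_dec t 0); [lra |]. destruct (Rle_dec 1 t); [lra | reflexivity]. Qed.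

Lemma U01_nonpos (t : R) : U01 t <= 0.
Proof.
  unfold U01. destruct (Rle_dec t 0); [lra |]. destruct (Rle_dec 1 t); [lra |].
  pose proof (U_between t ltac:(lra)). pose proof (w_neg t ltac:(lra)). lra.
Qed.

Lemma U01_deriv (x : R) : 0 < x < 1 -> is_derive U01 x (h x - c - q x / U01 x).
Proof.
  intros Hx. rewrite U01_interior by exact Hx. apply (is_derive_ext_loc U).
  - eapply filter_imp; [| exact (locally_01 x Hx)]. intros y Hy. symmetry. apply U01_interior, Hy.
  - apply U_deriv, Hx.
Qed.

(* At an endpoint where U01 vanishes, continuity only needs a lower bound. *)
Lemma U01_cont_at_zero (x0 : R) : U01 x0 = 0 ->
  (forall eps, 0 < eps -> exists d, 0 < d /\ forall y, 0 <= y <= 1 -> Rabs (y - x0) < d -> - eps < U01 y) ->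
  filterlim U01 (within (fun y => 0 <= y <= 1) (locally x0)) (locally (U01 x0)).
Proof.
  intros H0 Hnear. rewrite H0. apply filterlim_locally. intros eps.
  destruct (Hnear eps (cond_pos eps)) as [d [Hd Hd2]].
  exists (mkposreal d Hd). intros y Hy Hy01. change (Rabs (U01 y - 0) < eps).
  specialize (Hd2 y Hy01 Hy). pose proof (U01_nonpos y). apply Rabs_lt_between. lra.
Qed.

Lemma U01_cont : cont_on_01 U01.
Proof.
  intros x Hx.
  destruct (Rle_lt_or_eq_dec 0 x (proj1 Hx)) as [H0 | <-];
    [destruct (Rle_lt_or_eq_dec x 1 (proj2 Hx)) as [H1 | ->] |].
  - apply continuity_pt_within. eapply is_derive_continuity_pt, U01_deriv. lra.
  - apply U01_cont_at_zero; [unfold U01; destruct (Rle_dec 1 0), (Rle_dec 1 1); lra |].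
    intros eps Heps. destruct (U_near_1 eps Heps) as [d [Hd Hnear]].
    exists d. split; [exact Hd |]. intros y Hy Hyd. apply Rabs_lt_between in Hyd.
    destruct (Rle_lt_or_eq_dec y 1 (proj2 Hy)) as [Hy1 | ->].
    + destruct (Rle_lt_or_eq_dec 0 y (proj1 Hy)) as [Hy0 | <-].
      * rewrite U01_interior by lra. apply Hnear. lra.
      * unfold U01. destruct (Rle_dec 0 0); lra.
    + unfold U01. destruct (Rle_dec 1 0), (Rle_dec 1 1); lra.
  - apply U01_cont_at_zero; [unfold U01; destruct (Rle_dec 0 0); lra |].
    intros eps Heps. destruct z_sol as [Zc [_ [_ [_ Z0]]]].
    destruct (cont_01_eps z 0 Zc ltac:(lra) eps Heps) as [d [Hd Hnear]].
    exists d. split; [exact Hd |]. intros y Hy Hyd.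
    destruct (Rle_lt_or_eq_dec 0 y (proj1 Hy)) as [Hy0 | <-];
      [destruct (Rle_lt_or_eq_dec y 1 (proj2 Hy)) as [Hy1 | ->] |].
    + specialize (Hnear y Hy Hyd). rewrite Z0, Rminus_0_r in Hnear. apply Rabs_lt_between in Hnear.
      rewrite U01_interior by lra. pose proof (U_between y ltac:(lra)). lra.
    + unfold U01. destruct (Rle_dec 1 0), (Rle_dec 1 1); lra.
    + unfold U01. destruct (Rle_dec 0 0); lra.
Qed.

Lemma perron_solution : exists V, sol_P00 h q c V.
Proof.
  exists U01.
  assert (Hneg : forall x, 0 < x < 1 -> U01 x < 0).
  { intros x Hx. rewrite U01_interior by exact Hx.
    pose proof (U_between x Hx). pose proof (w_neg x Hx). lra. }
  split; [split; [exact U01_cont | split; [exact U01_deriv | split; [| split; [exact Hneg |]]]] |].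
  - intros x Hx.
    apply (continuous_ext_loc _ (fun t => h t - c - q t / U01 t)).
    + eapply filter_imp; [| exact (locally_01 x Hx)]. intros y Hy.
      symmetry. apply is_derive_unique, U01_deriv, Hy.
    + apply continuity_pt_filterlim.
      apply continuity_pt_minus; [apply continuity_pt_minus; [apply h_cont_pt, Hx | apply const_cont_pt] |].
      apply continuity_pt_div; [apply q_cont_pt, Hx | eapply is_derive_continuity_pt, U01_deriv, Hx |].
      pose proof (Hneg x Hx). lra.
  - unfold U01. destruct (Rle_dec 0 0); lra.
  - unfold U01. destruct (Rle_dec 1 0), (Rle_dec 1 1); lra.
Qed.

End Perron.

Theorem proposition6p3 (f h q : R -> R) (cstar : R) :
  C1_01_with_deriv f h -> f 0 = 0 -> cond_q q ->
  (forall c, (exists z, sol_P00 h q c z) <-> cstar <= c) ->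
  forall c, c < cstar -> ~ (exists z, sol_P h q c z).
Proof.
  intros [_ Hh] _ Hq Hcstar c Hc [z Hz].
  assert (Hno00 : ~ exists V, sol_P00 h q c V) by (intros HV; apply Hcstar in HV; lra).
  destruct (proj2 (Hcstar cstar) (Rle_refl _)) as [w Hw].
  destruct (Rle_lt_or_eq_dec _ _ (sol_P_nonpos_at_1 h q z c Hz)) as [Hz1 | Hz1].
  -
    pose proof (sol_P_below_sol_P00 h q z w c cstar Hz Hw Hc Hz1) as Hzw.
    destruct (cont_01_bounded z (proj1 Hz)) as [zmax Hzmax].
    destruct (cont_01_bounded h Hh) as [hmax Hhmax].
    destruct (cont_01_bounded q (proj1 Hq)) as [qmax Hqmax].
    exact (Hno00 (perron_solution h q z w c cstar Hh Hq Hz Hw Hc Hzw zmax hmax qmax Hzmax Hhmax Hqmax)).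
  -
    exact (Hno00 (ex_intro _ z (conj Hz Hz1))).
Qed.
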